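(* Let $\mathfrak{C}$ be a category and $\mathbb{K}$ a field. A map $\rho : \mathfrak{C} \times \mathfrak{C} \to \mathbb{K}$ is a factor set for some projective representation of $\mathfrak{C}$ if and only if $$\rho(x,y)\rho(xy,z) = \rho(x,yz)\rho(y,z)\quad\text{and}\quad \big(\rho(x,y) = 0 \iff \rho(r(x),xy) = 0\big)$$ for all $(x,y,z) \in \mathfrak{C}^3$.
   Context: A semigroupoid is a set with a partially defined associative binary operation; we write $\exists xy$ when $xy$ is defined. A category is a semigroupoid in which every $x$ has unique identities $r(x),d(x)$ with $\exists r(x)x$, $\exists xd(x)$ (and $r(x)x=x=xd(x)$); $\exists xy$ iff $d(x)=r(y)$. $\mathfrak{C}^2$, $\mathfrak{C}^3$ denote composable pairs and triples. A $\mathbb{K}$-semigroup is a semigroup $S$ with zero and a map $\mathbb{K}\times S\to S$ with $\alpha(\beta x)=(\alpha\beta)x$, $1x=x$, $\alpha(xy)=(\alpha x)y=x(\alpha y)$ and $0_{\mathbb{K}}x=0_S$; it is $\mathbb{K}$-cancellative if $\alpha x=\beta x$ with $x\ne0$ implies $\alpha=\beta$. A projective representation of a semigroupoid $\mathfrak{C}$ on a $\mathbb{K}$-cancellative semigroup $S$ is a map $\Gamma:\mathfrak{C}\to S$ such that (i) if $\exists xy$ then $\Gamma(xy)=0\iff\Gamma(x)\Gamma(y)=0$, and if $xy$ is not defined then $\Gamma(x)\Gamma(y)=0$; (ii) there is $\rho$ with $\Gamma(x)\Gamma(y)=\Gamma(xy)\rho(x,y)$, $\rho(x,y)\in\mathbb{K}^*$,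 whenever $\exists xy$ and $\Gamma(xy)\ne0$. The factor set of $\Gamma$ is this (unique) $\rho$, extended to all of $\mathfrak{C}\times\mathfrak{C}$ by $\rho(x,y)=0$ when $xy$ is not defined or $\Gamma(xy)=0$. *)

From mathcomp Require Import all_boot all_algebra.
Set Implicit Arguments. Unset Strict Implicit. Unset Printing Implicit Defensive.
Import GRing.Theory.
Local Open Scope ring_scope.

(* A semigroupoid: a set with a partially defined associative product.
   [sdef x y] means "xy is defined" (written ∃xy in the paper);
   [smul x y] is the product, meaningful only when [sdef x y]. *)
Record semigroupoid := Semigroupoid {
  sg_carrier :> Type;
  sdef : sg_carrier -> sg_carrier -> Prop;
  smul : sg_carrier -> sg_carrier -> sg_carrier;
  sdef_assoc1 : forall x y z,
    (sdef x y /\ sdef (smul x y) z) <-> (sdef y z /\ sdef x (smul y z));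
  sdef_assoc2 : forall x y z,
    (sdef y z /\ sdef x (smul y z)) <-> (sdef x y /\ sdef y z);
  smulA : forall x y z, sdef x y -> sdef y z ->
    smul (smul x y) z = smul x (smul y z)
}.

Definition is_identity (S : semigroupoid) (e : S) : Prop :=
  forall y : S, (sdef e y -> smul e y = y) /\ (sdef y e -> smul y e = y).

Record category := Category {
  cat_sg :> semigroupoid;
  cr : cat_sg -> cat_sg;
  cd : cat_sg -> cat_sg;
  cr_id : forall x, is_identity (cr x);
  cr_def : forall x, sdef (cr x) x;
  cr_uniq : forall x e, is_identity e -> sdef e x -> e = cr x;
  cd_id : forall x, is_identity (cd x);
  cd_def : forall x, sdef x (cd x);
  cd_uniq : forall x e, is_identity e -> sdef x e -> e = cd x;
  sdef_iff : forall x y, sdef x y <-> cd x = cr y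
}.

Record Ksemigroup (K : fieldType) := KSemigroup {
  ks_carrier :> Type;
  kmul : ks_carrier -> ks_carrier -> ks_carrier;
  kzero : ks_carrier;
  kscale : K -> ks_carrier -> ks_carrier;
  kmulA : forall x y z, kmul (kmul x y) z = kmul x (kmul y z);
  kmul0s : forall x, kmul kzero x = kzero;
  kmuls0 : forall x, kmul x kzero = kzero;
  kscaleA : forall (a b : K) x, kscale a (kscale b x) = kscale (a * b) x;
  kscale1 : forall x, kscale 1 x = x;
  kscale_mull : forall (a : K) x y, kscale a (kmul x y) = kmul (kscale a x) y;
  kscale_mulr : forall (a : K) x y, kscale a (kmul x y) = kmul x (kscale a y);
  kscale0 : forall x, kscale 0 x = kzero
}.

Definition Kcancellative (K : fieldType) (S : Ksemigroup K) : Prop :=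
  forall (a b : K) (x : S), x <> kzero S -> kscale a x = kscale b x -> a = b.

Definition proj_rep (K : fieldType) (C : semigroupoid) (S : Ksemigroup K)
  (G : C -> S) : Prop :=
  (forall x y, sdef x y -> (G (smul x y) = kzero S <-> kmul (G x) (G y) = kzero S))
  /\ (forall x y, ~ sdef x y -> kmul (G x) (G y) = kzero S)
  /\ exists rho : C -> C -> K, forall x y, sdef x y -> G (smul x y) <> kzero S ->
       kmul (G x) (G y) = kscale (rho x y) (G (smul x y)) /\ rho x y != 0.

(* [rho] is the factor set of G (extended by 0 outside the pairs (x,y)
   with xy defined and G(xy) <> 0). *)
Definition factor_set_of (K : fieldType) (C : semigroupoid) (S : Ksemigroup K)
  (G : C -> S) (rho : C -> C -> K) : Prop :=
  forall x y,
    (sdef x y /\ G (smul x y) <> kzero S ->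
       kmul (G x) (G y) = kscale (rho x y) (G (smul x y)) /\ rho x y != 0)
    /\ (~ (sdef x y /\ G (smul x y) <> kzero S) -> rho x y = 0).

Definition is_factor_set (K : fieldType) (C : semigroupoid) (rho : C -> C -> K)
  : Prop :=
  exists (S : Ksemigroup K) (G : C -> S),
    Kcancellative S /\ proj_rep G /\ factor_set_of G rho.

From mathcomp Require Import all_boot all_algebra.
From mathcomp Require Import ring.
From Stdlib Require Import Classical.
Import GRing.Theory.
Local Open Scope ring_scope.

Set Implicit Arguments. Unset Strict Implicit.

(* Necessity: for a projective representation G with factor set rho, both
   sides of the cocycle identity are the scalar by which the two bracketings
   of G x G y G z differ from G (xyz), so K-cancellativity equates them; and
   rho(x,y) = 0 <-> G(xy) = 0 <-> G(r(x) xy) = 0 <-> rho(r(x), xy) = 0.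
   Sufficiency: on 0 together with the formal multiples a x (a in K^*, x in C)
   the product (a x)(b y) = a b rho(x,y) xy is associative by the cocycle
   identity, and G x = x if rho(r(x), x) <> 0, G x = 0 otherwise, is a
   projective representation with factor set rho: the zero condition makes
   G(xy) <> 0 exactly when rho(x,y) <> 0, and together with the cocycle
   identity it forces rho(r(x), x), rho(r(y), y) <> 0 whenever rho(x,y) <> 0,
   so that G x G y = rho(x,y) xy. *)

Section SemigroupoidTheory.
Variable C : semigroupoid.
Implicit Types x y z : C.

Lemma sdef_smull x y z : sdef x y -> sdef y z -> sdef (smul x y) z.
Proof.
move=> hxy hyz; have [hyz' hx_yz] := (sdef_assoc2 x y z).2 (conj hxy hyz).
by case: ((sdef_assoc1 x y z).2 (conj hyz' hx_yz)).
Qed.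

Lemma sdef_smulr x y z : sdef x y -> sdef y z -> sdef x (smul y z).
Proof. by move=> hxy hyz; case: ((sdef_assoc2 x y z).2 (conj hxy hyz)). Qed.

Lemma sdef_of_smull x y z : sdef x y -> sdef (smul x y) z -> sdef y z.
Proof. by move=> hxy hxy_z; case: ((sdef_assoc1 x y z).1 (conj hxy hxy_z)). Qed.

Lemma sdef_of_smulr x y z : sdef y z -> sdef x (smul y z) -> sdef x y.
Proof. by move=> hyz hx_yz; case: ((sdef_assoc2 x y z).1 (conj hyz hx_yz)). Qed.

End SemigroupoidTheory.

Section CategoryTheory.
Variable C : category.
Implicit Types x y : C.

Lemma smul_cr x : smul (cr x) x = x.
Proof. exact: ((cr_id x) x).1 (cr_def x). Qed.

Lemma sdef_cr_smul x y : sdef x y -> sdef (cr x) (smul x y).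
Proof. exact: sdef_smulr (cr_def x). Qed.

Lemma smul_cr_smul x y : sdef x y -> smul (cr x) (smul x y) = smul x y.
Proof. by move=> hxy; rewrite -(smulA (cr_def x) hxy) smul_cr. Qed.

Lemma cr_smul x y : sdef x y -> cr (smul x y) = cr x.
Proof. by move=> hxy; symmetry; apply: cr_uniq (cr_id x) (sdef_cr_smul hxy). Qed.

Lemma sdef_smul_cr x y : sdef x y -> sdef x (cr y).
Proof. by move=> hxy; apply: sdef_of_smulr (cr_def y) _; rewrite smul_cr. Qed.

Lemma smul_smul_cr x y : sdef x y -> smul x (cr y) = x.
Proof. by move=> hxy; exact: ((cr_id y) x).2 (sdef_smul_cr hxy). Qed.

End CategoryTheory.

Section FactorSetOfRepresentation.
Variables (K : fieldType) (C : semigroupoid) (S : Ksemigroup K).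
Variables (G : C -> S) (rho : C -> C -> K).
Hypothesis rho_fs : factor_set_of G rho.

Lemma factor_setE x y : sdef x y -> G (smul x y) <> kzero S ->
  kmul (G x) (G y) = kscale (rho x y) (G (smul x y)).
Proof. by move=> hxy hG; case: (rho_fs x y).1. Qed.

Lemma factor_set_eq0P x y : sdef x y -> rho x y = 0 <-> G (smul x y) = kzero S.
Proof.
move=> hxy; split=> [rho0|G0]; last by apply: (rho_fs x y).2 => -[].
apply: NNPP => G_neq0; have [_] := (rho_fs x y).1 (conj hxy G_neq0).
by rewrite rho0 eqxx.
Qed.

Lemma factor_set_cocycle x y z : Kcancellative S -> proj_rep G ->
  sdef x y -> sdef y z ->
  rho x y * rho (smul x y) z = rho x (smul y z) * rho y z.
Proof.
move=> canc [G_mul_eq0 _] hxy hyz.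
have hxy_z := sdef_smull hxy hyz; have hx_yz := sdef_smulr hxy hyz.
have assoc := smulA hxy hyz.
case: (classic (G (smul (smul x y) z) = kzero S)) => [G0|G_neq0].
  rewrite (factor_set_eq0P hxy_z).2 // (factor_set_eq0P hx_yz).2 -?assoc //.
  by rewrite mulr0 mul0r.
have Gxy_neq0 : G (smul x y) <> kzero S.
  by move=> Gxy0; apply/G_neq0/(G_mul_eq0 _ _ hxy_z).2; rewrite Gxy0 kmul0s.
have Gyz_neq0 : G (smul y z) <> kzero S.
  move=> Gyz0; apply/G_neq0; rewrite assoc.
  by apply/(G_mul_eq0 _ _ hx_yz).2; rewrite Gyz0 kmuls0.
have G_neq0' : G (smul x (smul y z)) <> kzero S by rewrite -assoc.
have := kmulA (G x) (G y) (G z).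
rewrite (factor_setE hxy) // (factor_setE hyz) // -kscale_mull -kscale_mulr.
rewrite (factor_setE hxy_z) // (factor_setE hx_yz) // !kscaleA -assoc => e.
by rewrite [RHS]mulrC; exact: canc G_neq0 e.
Qed.

End FactorSetOfRepresentation.

(* [None] is the zero; [Some (a, x)] is the formal multiple a x, a <> 0. *)
Definition twisted (K : fieldType) (T : Type) := option {p : K * T | p.1 != 0}.

Section Twisted.
Variables (K : fieldType) (T : Type).
Implicit Types (a b c : K) (x y : T) (u : twisted K T).

Definition tw_mk a x : twisted K T := insub (a, x).

Definition tw_coef u : K := if u is Some p then (val p).1 else 0.

Definition tw_scale a u : twisted K T :=
  if u is Some p then tw_mk (a * (val p).1) (val p).2 else None.

Lemma tw_mk0 x : tw_mk 0 x = None.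
Proof. by rewrite /tw_mk insubF //= eqxx. Qed.

Lemma tw_mkT a x (a_neq0 : a != 0) : tw_mk a x = Some (exist _ (a, x) a_neq0).
Proof. exact: insubT. Qed.

Lemma tw_mk_eq0 a x : tw_mk a x = None <-> a = 0.
Proof.
split=> [|->]; last exact: tw_mk0.
by have [//|a_neq0] := eqVneq a 0; rewrite (tw_mkT x a_neq0).
Qed.

Lemma tw_mk_eq a b x y : a = b -> (a != 0 -> x = y) -> tw_mk a x = tw_mk b y.
Proof.
move=> <- same_pt; have [->|/same_pt->//] := eqVneq a 0.
by rewrite !tw_mk0.
Qed.

Lemma tw_coef_mk a x : tw_coef (tw_mk a x) = a.
Proof. by have [->|a_neq0] := eqVneq a 0; rewrite ?tw_mk0 // (tw_mkT x a_neq0). Qed.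

Variant tw_spec : twisted K T -> Type :=
  | TwZero : tw_spec None
  | TwMk a x of a != 0 : tw_spec (tw_mk a x).

Lemma twP u : tw_spec u.
Proof.
case: u => [[[a x] a_neq0]|]; last exact: TwZero.
by rewrite -[Some _]valK; exact: TwMk.
Qed.

Lemma tw_scale_mk c a x : tw_scale c (tw_mk a x) = tw_mk (c * a) x.
Proof.
have [->|a_neq0] := eqVneq a 0; first by rewrite tw_mk0 mulr0 tw_mk0.
by rewrite (tw_mkT x a_neq0).
Qed.

Lemma tw_scaleA a b u : tw_scale a (tw_scale b u) = tw_scale (a * b) u.
Proof. by case: u / twP => // c x _; rewrite !tw_scale_mk mulrA. Qed.

Lemma tw_scale1 u : tw_scale 1 u = u.
Proof. by case: u / twP => // c x _; rewrite tw_scale_mk mul1r. Qed.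

Lemma tw_scale0 u : tw_scale 0 u = None.
Proof. by case: u / twP => // c x _; rewrite tw_scale_mk mul0r tw_mk0. Qed.

Lemma tw_scale_Kcancellative a b u :
  u <> None -> tw_scale a u = tw_scale b u -> a = b.
Proof.
case: u / twP => // c x c_neq0 _ /(congr1 tw_coef).
by rewrite !tw_scale_mk !tw_coef_mk; exact: mulIf.
Qed.

End Twisted.

Section TwistedSemigroup.
Variables (K : fieldType) (C : semigroupoid) (rho : C -> C -> K).
Implicit Types (a b c : K) (x y z : C) (u v w : twisted K C).

Definition tw_mul u v : twisted K C :=
  if (u, v) is (Some p, Some q) then
    tw_mk ((val p).1 * (val q).1 * rho (val p).2 (val q).2)
          (smul (val p).2 (val q).2)
  else None.

Lemma tw_mulr0 u : tw_mul u None = None.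
Proof. by case: u. Qed.

Lemma tw_mul_mk a b x y :
  tw_mul (tw_mk a x) (tw_mk b y) = tw_mk (a * b * rho x y) (smul x y).
Proof.
have [->|a_neq0] := eqVneq a 0; first by rewrite tw_mk0 !mul0r tw_mk0.
have [->|b_neq0] := eqVneq b 0; first by rewrite tw_mk0 tw_mulr0 mulr0 mul0r tw_mk0.
by rewrite (tw_mkT x a_neq0) (tw_mkT y b_neq0).
Qed.

Lemma tw_scale_mull a u v : tw_scale a (tw_mul u v) = tw_mul (tw_scale a u) v.
Proof.
case: u / twP => // b x _; case: v / twP => [|c y _]; first by rewrite !tw_mulr0.
by rewrite tw_mul_mk !tw_scale_mk tw_mul_mk !mulrA.
Qed.

Lemma tw_scale_mulr a u v : tw_scale a (tw_mul u v) = tw_mul u (tw_scale a v).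
Proof.
case: u / twP => // b x _; case: v / twP => [|c y _]; first by rewrite !tw_mulr0.
by rewrite tw_mul_mk !tw_scale_mk tw_mul_mk; congr (tw_mk _ _); ring.
Qed.

Hypothesis rho_out : forall x y, ~ sdef x y -> rho x y = 0.
Hypothesis rho_cocycle : forall x y z, sdef x y -> sdef y z ->
  rho x y * rho (smul x y) z = rho x (smul y z) * rho y z.

Lemma sdef_of_rho_neq0 x y : rho x y != 0 -> sdef x y.
Proof. by move=> rho_neq0; apply: NNPP => /rho_out; apply/eqP. Qed.

Lemma rho_cocycle_total x y z :
  rho x y * rho (smul x y) z = rho x (smul y z) * rho y z.
Proof.
have [hxy|nxy] := classic (sdef x y); last first.
  rewrite rho_out // mul0r.
  have [hyz|nyz] := classic (sdef y z); last by rewrite [rho y z]rho_out ?mulr0.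
  by rewrite rho_out ?mul0r // => /(sdef_of_smulr hyz)/nxy.
have [hyz|nyz] := classic (sdef y z); first exact: rho_cocycle.
rewrite [rho y z]rho_out // [rho (smul x y) z]rho_out ?mulr0 //.
by move=> /(sdef_of_smull hxy)/nyz.
Qed.

Lemma smulA_of_rho_neq0 x y z :
  rho x y * rho (smul x y) z != 0 -> smul (smul x y) z = smul x (smul y z).
Proof.
rewrite mulf_eq0 negb_or => /andP[/sdef_of_rho_neq0 hxy /sdef_of_rho_neq0 hxy_z].
exact: smulA hxy (sdef_of_smull hxy hxy_z).
Qed.

Lemma tw_mulA u v w : tw_mul (tw_mul u v) w = tw_mul u (tw_mul v w).
Proof.
case: u / twP => // a x _.
case: v / twP => [|b y _]; first by rewrite !tw_mulr0.
case: w / twP => [|c z _]; first by rewrite !tw_mulr0.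
rewrite !tw_mul_mk.
have -> : a * b * rho x y * c * rho (smul x y) z
          = a * b * c * (rho x y * rho (smul x y) z) by ring.
apply: tw_mk_eq; first by rewrite rho_cocycle_total; ring.
by rewrite mulf_eq0 negb_or => /andP[_]; exact: smulA_of_rho_neq0.
Qed.

Definition twisted_semigroup : Ksemigroup K :=
  @KSemigroup K (twisted K C) tw_mul None (@tw_scale K C) tw_mulA
    (fun _ => erefl) tw_mulr0 (@tw_scaleA K C) (@tw_scale1 K C)
    tw_scale_mull tw_scale_mulr (@tw_scale0 K C).

Lemma twisted_semigroup_Kcancellative : Kcancellative twisted_semigroup.
Proof. exact: tw_scale_Kcancellative. Qed.

End TwistedSemigroup.

Section TwistedRepresentation.
Variables (K : fieldType) (C : category) (rho : C -> C -> K).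
Implicit Types x y : C.
Hypothesis rho_out : forall x y, ~ sdef x y -> rho x y = 0.
Hypothesis rho_cocycle : forall x y z, sdef x y -> sdef y z ->
  rho x y * rho (smul x y) z = rho x (smul y z) * rho y z.
Hypothesis rho_eq0_cr : forall x y, sdef x y ->
  rho x y = 0 <-> rho (cr x) (smul x y) = 0.

Definition twisted_rep x : twisted K C :=
  tw_mk (if rho (cr x) x == 0 then 0 else 1) x.

Lemma rho_cr_smul_eq0 x y : sdef x y ->
  (rho (cr (smul x y)) (smul x y) == 0) = (rho x y == 0).
Proof. by move=> hxy; rewrite cr_smul //; apply/eqP/eqP => /(rho_eq0_cr hxy). Qed.

Lemma rho_cr_neq0_l x y : rho x y != 0 -> rho (cr x) x != 0.
Proof.
move=> rho_neq0; have hxy := sdef_of_rho_neq0 rho_out rho_neq0.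
have rho_cr_xy_neq0 : rho (cr x) (smul x y) != 0.
  by apply: contra_neq rho_neq0 => /(rho_eq0_cr hxy).
have e := rho_cocycle (cr_def x) hxy; rewrite smul_cr in e.
by move: (mulf_neq0 rho_cr_xy_neq0 rho_neq0); rewrite -e mulf_eq0 negb_or => /andP[].
Qed.

Lemma rho_cr_neq0_r x y : rho x y != 0 -> rho (cr y) y != 0.
Proof.
move=> rho_neq0; have hxy := sdef_of_rho_neq0 rho_out rho_neq0.
have hx_cr := sdef_smul_cr hxy.
have rho_x_cr_neq0 : rho x (cr y) != 0.
  apply: contra_neq (rho_cr_neq0_l rho_neq0) => /(rho_eq0_cr hx_cr).
  by rewrite smul_smul_cr.
have e := rho_cocycle hx_cr (cr_def y); rewrite smul_smul_cr // smul_cr in e.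
by move: (mulf_neq0 rho_x_cr_neq0 rho_neq0); rewrite e mulf_eq0 negb_or => /andP[].
Qed.

Lemma twisted_rep_scale x y :
  tw_scale (rho x y) (twisted_rep (smul x y)) = tw_mk (rho x y) (smul x y).
Proof.
rewrite /twisted_rep tw_scale_mk.
have [->|rho_neq0] := eqVneq (rho x y) 0; first by rewrite mul0r.
have hxy := sdef_of_rho_neq0 rho_out rho_neq0.
by rewrite rho_cr_smul_eq0 // (negbTE rho_neq0) mulr1.
Qed.

Lemma twisted_rep_mul x y :
  tw_mul rho (twisted_rep x) (twisted_rep y)
  = tw_scale (rho x y) (twisted_rep (smul x y)).
Proof.
rewrite twisted_rep_scale /twisted_rep tw_mul_mk.
have [->|rho_neq0] := eqVneq (rho x y) 0; first by rewrite mulr0.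
by rewrite (negbTE (rho_cr_neq0_l rho_neq0)) (negbTE (rho_cr_neq0_r rho_neq0)) !mul1r.
Qed.

Lemma twisted_rep_eq0 x y : sdef x y ->
  twisted_rep (smul x y) = None <-> rho x y = 0.
Proof.
move=> hxy; rewrite /twisted_rep rho_cr_smul_eq0 // tw_mk_eq0.
case: eqP => [-> //|rho_neq0]; split=> [/eqP|//].
by rewrite oner_eq0.
Qed.

Local Notation tw_semigroup := (twisted_semigroup rho_out rho_cocycle).

Lemma twisted_rep_factor_set : factor_set_of (S := tw_semigroup) twisted_rep rho.
Proof.
move=> x y; split=> [[hxy Gxy_neq0]|not_def_or_G0].
  split; first exact: twisted_rep_mul.
  by apply/eqP => /(twisted_rep_eq0 hxy).
have [//|rho_neq0] := eqVneq (rho x y) 0.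
have hxy := sdef_of_rho_neq0 rho_out rho_neq0.
case: not_def_or_G0; split=> // /(twisted_rep_eq0 hxy)/eqP.
by rewrite (negbTE rho_neq0).
Qed.

Lemma twisted_rep_proj_rep : proj_rep (S := tw_semigroup) twisted_rep.
Proof.
split=> [x y hxy /=|].
  by rewrite twisted_rep_mul twisted_rep_scale tw_mk_eq0; exact: twisted_rep_eq0.
split=> [x y nxy /=|].
  by rewrite twisted_rep_mul twisted_rep_scale rho_out // tw_mk0.
by exists rho => x y hxy hG; exact: (twisted_rep_factor_set x y).1.
Qed.

Lemma cocycle_is_factor_set : is_factor_set rho.
Proof.
exists tw_semigroup, twisted_rep.
split; first exact: twisted_semigroup_Kcancellative.
split; [exact: twisted_rep_proj_rep | exact: twisted_rep_factor_set].
Qed.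

End TwistedRepresentation.

Theorem mainTheorem5 (C : category) (K : fieldType) (rho : C -> C -> K)
  (rho_out : forall x y : C, ~ sdef x y -> rho x y = 0) :
  is_factor_set rho <->
  (forall x y z : C, sdef x y -> sdef y z ->
     rho x y * rho (smul x y) z = rho x (smul y z) * rho y z
     /\ (rho x y = 0 <-> rho (cr x) (smul x y) = 0)).
Proof.
split=> [[S [G [canc [rep fs]]]] x y z hxy hyz|cond].
  split; first exact: factor_set_cocycle.
  rewrite (factor_set_eq0P fs hxy) (factor_set_eq0P fs (sdef_cr_smul hxy)).
  by rewrite smul_cr_smul.
apply: cocycle_is_factor_set => // [x y z hxy hyz|x y hxy].
  exact: (cond x y z hxy hyz).1.
exact: (cond x y (cd y) hxy (cd_def y)).2.
Qed.
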